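(* Let $\mathbb{F}$ be an algebraically closed field of characteristic zero and $J_1=E_{12}$. Let $\underline{A}=(J_1,A_2,A_3)$ and $\underline{B}=(J_1,B_2,B_3)$ be elements of $\mathcal{N}_3^3$ such that $f(\underline{A})=f(\underline{B})$ for all $f\in S_{3,3}$. Then $f(\underline{A})=f(\underline{B})$ for all $f\in P_{3,3}$.
   Context: $E_{ij}$ is the $3\times3$ matrix unit. $\mathcal{N}_3^3$ is the set of triples of nilpotent $3\times3$ matrices over $\mathbb{F}$. $\mathrm{tr}(Y_{i_1}\cdots Y_{i_r})$ denotes the function $\underline{A}\mapsto\mathrm{tr}(A_{i_1}\cdots A_{i_r})$. $S_{3,3}$ is the set consisting of: $\mathrm{tr}(Y_iY_j),\ \mathrm{tr}(Y_i^2Y_j),\ \mathrm{tr}(Y_iY_j^2),\ \mathrm{tr}(Y_i^2Y_j^2),\ \mathrm{tr}(Y_i^2Y_j^2Y_iY_j)$ for $1\le i<j\le3$; $\mathrm{tr}(Y_1Y_2Y_3)$, $\mathrm{tr}(Y_1Y_3Y_2)$; $\mathrm{tr}(Y_i^2Y_jY_k)$ for $\{i,j,k\}=\{1,2,3\}$; $\mathrm{tr}(Y_1^2Y_2Y_1Y_3)$, $\mathrm{tr}(Y_2^2Y_1Y_2Y_3)$, $\mathrm{tr}(Y_3^2Y_1Y_3Y_2)$. $P_{3,3}=S_{3,3}\sqcup P'_{3,3}$, where $P'_{3,3}$ consists of $\mathrm{tr}(Y_i^2Y_j^2Y_k)$ and $\mathrm{tr}(Y_i^2Y_j^2Y_iY_k)$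 for $\{i,j,k\}=\{1,2,3\}$, and $\mathrm{tr}(Y_1^2Y_2^2Y_3^2)$. *)

From mathcomp Require Import all_boot all_algebra.
Set Implicit Arguments. Unset Strict Implicit. Unset Printing Implicit Defensive.
Import GRing.Theory.
Local Open Scope ring_scope.

Definition nilpotent_mx (F : fieldType) (n : nat) (A : 'M[F]_n) : Prop :=
  exists k : nat, A ^+ k = 0.

(* The matrix unit E_{12} (indices 1..3 in the paper, 0..2 here). *)
Definition E12 (F : fieldType) : 'M[F]_3 := delta_mx 0 1.

Definition sel3 (F : fieldType) (A1 A2 A3 : 'M[F]_3) (i : nat) : 'M[F]_3 :=
  match i with 1 => A1 | 2 => A2 | _ => A3 end.

(* tr(Y_{i_1} ... Y_{i_r}) evaluated at the triple (A1,A2,A3);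
   a word is a list of indices in {1,2,3}. *)
Definition trw (F : fieldType) (A1 A2 A3 : 'M[F]_3) (w : seq nat) : F :=
  \tr (\prod_(i <- w) sel3 A1 A2 A3 i).

Definition pairs3 : seq (nat * nat) := [:: (1,2); (1,3); (2,3)]%N.
Definition perms3 : seq (nat * nat * nat) :=
  [:: (1,2,3); (1,3,2); (2,1,3); (2,3,1); (3,1,2); (3,2,1)]%N.

Definition S33 : seq (seq nat) :=
  flatten [seq [:: [:: i; j]; [:: i; i; j]; [:: i; j; j]; [:: i; i; j; j];
                  [:: i; i; j; j; i; j]] | '(i, j) <- pairs3]
  ++ [:: [:: 1; 2; 3]; [:: 1; 3; 2]]%N
  ++ [seq [:: i; i; j; k] | '(i, j, k) <- perms3]
  ++ [:: [:: 1; 1; 2; 1; 3]; [:: 2; 2; 1; 2; 3]; [:: 3; 3; 1; 3; 2]]%N.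

Definition P'33 : seq (seq nat) :=
  flatten [seq [:: [:: i; i; j; j; k]; [:: i; i; j; j; i; k]] | '(i, j, k) <- perms3]
  ++ [:: [:: 1; 1; 2; 2; 3; 3]]%N.

Definition P33 : seq (seq nat) := S33 ++ P'33.

From mathcomp Require Import all_boot all_algebra ring.
Set Implicit Arguments. Unset Strict Implicit. Unset Printing Implicit Defensive.
Import GRing.Theory.
Local Open Scope ring_scope.

(* Since [E12] squares to zero, every word of P'_{3,3} containing Y_1^2 has
   trace 0 on both triples; what remains are U = tr(Y_2^2 Y_3^2 Y_1),
   V = tr(Y_2^2 Y_3^2 Y_2 Y_1) and their images under Y_2 <-> Y_3.  For
   nilpotent X = Y_2 and Y = Y_3 there are identities
     tr(Y_1 Y_2) U = P_1,  tr(Y_1 Y_2) V = tr(Y_1 Y_2^2) U + P_2,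
     tr(Y_1 Y_2^2) V = P_3
   with each P_i a polynomial in traces of words of S_{3,3}; in coordinates
   each identity is an explicit combination of tr X^2, tr X^3 and tr Y^2,
   which is where 6 must be invertible.  Hence U and V are determined by the
   traces of S_{3,3} unless tr(Y_1 Y_2) = tr(Y_1 Y_2^2) = 0, in which case
   both vanish. *)

Section Words.
Variables (F : fieldType) (A1 A2 A3 : 'M[F]_3).

Lemma trw_rot n w : trw A1 A2 A3 (rot n w) = trw A1 A2 A3 w.
Proof.
by rewrite /trw /rot -{3}(cat_take_drop n w) !big_cat /= -!mulmxE mxtrace_mulC.
Qed.

(* [sel3] sends every index other than 1 and 2 to the third matrix, hence
   the default case. *)
Definition swap23 (i : nat) : nat := match i with 1 => 1 | 2 => 3 | _ => 2 end%N.

Lemma trw_swap23 w : trw A1 A3 A2 w = trw A1 A2 A3 (map swap23 w).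
Proof.
rewrite /trw big_map; congr (\tr _); apply: eq_bigr => i _.
by case: i => [|[|[|i]]].
Qed.

Lemma trw_infix11 w : A1 * A1 = 0 -> infix [:: 1; 1]%N w -> trw A1 A2 A3 w = 0.
Proof.
move=> A11 /infixP [u [v ->]].
by rewrite /trw !big_cat !big_cons big_nil /= mulr1 A11 mul0r mulr0 mxtrace0.
Qed.

End Words.

Lemma E12_sq (F : fieldType) : E12 F * E12 F = 0.
Proof. by rewrite -mulmxE mul_delta_mx_0. Qed.

Lemma nilpotent_mx_tr0 (F : closedFieldType) n (A : 'M[F]_n) :
  nilpotent_mx A -> \tr A = 0.
Proof.
case: n A => [|n] A [k Ak]; first by rewrite /mxtrace big_ord0.
have [r Hr] := closed_field_poly_normal (char_poly A).
rewrite (monicP (char_poly_monic A)) scale1r in Hr.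
have r0 z : z \in r -> z = 0.
  have hm : horner_mx A 'X^k = 0 by rewrite rmorphXn /= horner_mx_X.
  move=> zr; have : root (char_poly A) z by rewrite Hr root_prod_XsubC.
  rewrite -root_mxminpoly => /(root_dvdp (mxminpoly_min hm)).
  by rewrite rootE hornerXn expf_eq0 => /andP [_ /eqP].
have charA : char_poly A = 'X^(size r).
  rewrite Hr; elim: r r0 {Hr} => [|z r IH] r0; first by rewrite big_nil.
  rewrite big_cons (r0 z (mem_head _ _)) subr0 IH ?exprS // => y yr.
  by apply: r0; rewrite inE yr orbT.
have := size_char_poly A; rewrite charA size_polyXn => -[sr].
have := char_poly_trace A (ltn0Sn n); rewrite charA coefXn sr eqn_leq ltnn andbF.
by move/eqP; rewrite eq_sym oppr_eq0 => /eqP.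
Qed.

Lemma nilpotent_mx_trX (F : closedFieldType) n (A : 'M[F]_n) :
  nilpotent_mx A -> forall k, \tr (A ^+ k.+1) = 0.
Proof.
by move=> [m Am] k; apply: nilpotent_mx_tr0; exists m; rewrite exprAC Am expr0n.
Qed.

Local Notation i0 := (@Ordinal 3 0 isT).
Local Notation i1 := (@Ordinal 3 1 isT).
Local Notation i2 := (@Ordinal 3 2 isT).

Section Coordinates.
Variable F : fieldType.

Definition mx3 (a b c d e f g h i : F) : 'M[F]_3 :=
  \matrix_(r < 3, s < 3)
    (nth [::] [:: [:: a; b; c]; [:: d; e; f]; [:: g; h; i]] r)`_s.

Lemma mx3_tr0 (A : 'M[F]_3) : \tr A = 0 ->
  A = mx3 (A i0 i0) (A i0 i1) (A i0 i2) (A i1 i0) (A i1 i1) (A i1 i2)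
          (A i2 i0) (A i2 i1) (- (A i0 i0 + A i1 i1)).
Proof.
rewrite /mxtrace !big_ord_recr big_ord0 /= add0r => trA.
apply/matrixP => r s; rewrite mxE.
case: r => [[|[|[|//]]] Hr]; case: s => [[|[|[|//]]] Hs] /=;
  try by congr (A _ _); apply: val_inj.
apply/eqP; rewrite -addr_eq0 addrC -trA; apply/eqP.
by congr (A _ _ + A _ _ + A _ _); apply: val_inj.
Qed.

Lemma mul_mx3 (a b c d e f g h i a' b' c' d' e' f' g' h' i' : F) :
  mx3 a b c d e f g h i * mx3 a' b' c' d' e' f' g' h' i' =
  mx3 (a*a'+b*d'+c*g') (a*b'+b*e'+c*h') (a*c'+b*f'+c*i')
      (d*a'+e*d'+f*g') (d*b'+e*e'+f*h') (d*c'+e*f'+f*i')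
      (g*a'+h*d'+i*g') (g*b'+h*e'+i*h') (g*c'+h*f'+i*i').
Proof.
apply/matrixP => r s; rewrite -mulmxE !mxE !big_ord_recr big_ord0 /= !mxE add0r.
by case: r => [[|[|[|//]]] Hr]; case: s => [[|[|[|//]]] Hs].
Qed.

Lemma mxtrace_mx3 (a b c d e f g h i : F) :
  \tr (mx3 a b c d e f g h i) = a + e + i.
Proof. by rewrite /mxtrace !big_ord_recr big_ord0 /= !mxE add0r. Qed.

Lemma E12_mx3 : E12 F = mx3 0 1 0 0 0 0 0 0 0.
Proof.
apply/matrixP => r s; rewrite !mxE.
by case: r => [[|[|[|//]]] Hr]; case: s => [[|[|[|//]]] Hs].
Qed.

End Coordinates.

Lemma eq_by_combination {R : comPzRingType} (q1 q2 q3 : R) {c a b p1 p2 p3 : R} :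
  GRing.lreg c -> p1 = 0 -> p2 = 0 -> p3 = 0 ->
  c * (a - b) = q1 * p1 + q2 * p2 + q3 * p3 -> a = b.
Proof.
move=> c_reg -> -> ->; rewrite !mulr0 !addr0 => /eqP.
by rewrite mulrI_eq0 // subr_eq0 => /eqP.
Qed.
Arguments eq_by_combination {R} q1 q2 q3 {c a b p1 p2 p3}.

Section NilpotentPair.
Variables (F : fieldType) (X Y : 'M[F]_3).
Hypotheses (six_neq0 : 6%:R != 0 :> F)
  (trX : forall k, \tr (X ^+ k.+1) = 0) (trY : forall k, \tr (Y ^+ k.+1) = 0).

Local Notation t w := (trw (E12 F) X Y w%N).
Local Notation x i j := (X (@Ordinal 3 i isT) (@Ordinal 3 j isT)).
Local Notation y i j := (Y (@Ordinal 3 i isT) (@Ordinal 3 j isT)).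

Local Ltac expand_in_coordinates :=
  rewrite /trw !big_cons big_nil /= !exprS expr0 !mulr1
    (@mx3_tr0 _ X (trX 0)) (@mx3_tr0 _ Y (trY 0)) E12_mx3 !mul_mx3 !mxtrace_mx3.

Lemma trJX_mul_trX2Y2J :
  t [:: 1; 2] * t [:: 2; 2; 3; 3; 1] =
    - (t [:: 1; 3; 2] * t [:: 2; 2; 3; 1])
    - t [:: 1; 3] * t [:: 2; 2; 1; 2; 3]
    - t [:: 1; 2; 2] * t [:: 3; 3; 2; 1]
    + t [:: 1; 2; 2] * t [:: 1; 3] * t [:: 2; 3]
    + t [:: 1; 2] * t [:: 1; 3] * t [:: 2; 2; 3].
Proof.
move: (trX 1) (trX 2) (trY 1); expand_in_coordinates => pX2 pX3 pY2.
apply: (eq_by_combination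
  (3%:R * x 1 0 * y 1 2 * y 2 0 + 3%:R * x 1 0 * y 1 0 * y 1 1
   + 3%:R * x 1 0 * y 0 0 * y 1 0)
  (- 2%:R * y 1 0 * y 1 0)
  (3%:R * x 1 0 * x 1 2 * x 2 0 + 3%:R * x 1 0 * x 1 0 * x 1 1
   + 3%:R * x 0 0 * x 1 0 * x 1 0)
  (mulfI six_neq0) pX2 pX3 pY2).
by ring.
Qed.

Lemma trJX_mul_trX2Y2XJ :
  t [:: 1; 2] * t [:: 2; 2; 3; 3; 2; 1] =
    t [:: 1; 2; 2] * t [:: 2; 2; 3; 3; 1]
    + (t [:: 2; 2; 1; 3] * t [:: 2; 2; 1; 3]
       + t [:: 2; 2; 3; 1] * t [:: 2; 2; 1; 3]
       + t [:: 1; 3; 2] * t [:: 2; 2; 1; 2; 3]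
       - t [:: 1; 2] * t [:: 2; 2; 1; 3] * t [:: 2; 3]
       + t [:: 1; 2] * t [:: 1; 2] * t [:: 2; 2; 3; 3]).
Proof.
move: (trX 1) (trX 2) (trY 1); expand_in_coordinates => pX2 pX3 pY2.
apply: (eq_by_combination
  (- 3%:R * x 1 2 * x 2 0 * y 1 2 * y 2 0 - 6%:R * x 1 2 * x 2 0 * y 1 0 * y 1 1
   - 3%:R * x 1 2 * x 2 0 * y 0 0 * y 1 0 + 3%:R * x 1 1 * x 2 0 * y 1 0 * y 1 2
   - 3%:R * x 1 0 * x 2 1 * y 1 0 * y 1 2 + 3%:R * x 1 0 * x 2 0 * y 0 2 * y 1 0
   - 3%:R * x 1 0 * x 2 0 * y 0 0 * y 1 2 - 3%:R * x 1 0 * x 1 1 * y 1 2 * y 2 0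
   - 6%:R * x 1 0 * x 1 1 * y 1 0 * y 1 1 - 3%:R * x 1 0 * x 1 1 * y 0 0 * y 1 0
   - 3%:R * x 1 0 * x 1 0 * y 0 2 * y 2 0 - 3%:R * x 1 0 * x 1 0 * y 0 0 * y 1 1
   - 3%:R * x 1 0 * x 1 0 * y 0 0 * y 0 0 - 3%:R * x 0 2 * x 2 0 * y 1 0 * y 1 0
   - 3%:R * x 0 1 * x 1 0 * y 1 0 * y 1 0 - 3%:R * x 0 0 * x 1 0 * y 1 0 * y 1 1
   - 3%:R * x 0 0 * x 0 0 * y 1 0 * y 1 0)
  (- 2%:R * x 1 0 * y 1 2 * y 2 0 - 2%:R * x 1 0 * y 1 0 * y 1 1
   - 2%:R * x 1 0 * y 0 0 * y 1 0)
  (- 3%:R * x 1 2 * x 1 2 * x 2 0 * x 2 0 - 6%:R * x 1 0 * x 1 1 * x 1 2 * x 2 0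
   - 3%:R * x 1 0 * x 1 0 * x 1 1 * x 1 1 - 6%:R * x 0 0 * x 1 0 * x 1 2 * x 2 0
   - 6%:R * x 0 0 * x 1 0 * x 1 0 * x 1 1 - 3%:R * x 0 0 * x 0 0 * x 1 0 * x 1 0)
  (mulfI six_neq0) pX2 pX3 pY2).
by ring.
Qed.

Lemma trJX2_mul_trX2Y2XJ :
  t [:: 1; 2; 2] * t [:: 2; 2; 3; 3; 2; 1] =
    t [:: 2; 2; 3; 1] * t [:: 2; 2; 1; 2; 3]
    - t [:: 1; 2; 2] * t [:: 1; 2; 3] * t [:: 2; 2; 3]
    + t [:: 1; 2; 2] * t [:: 1; 2; 2] * t [:: 2; 3; 3].
Proof.
move: (trX 1) (trX 2) (trY 1); expand_in_coordinates => pX2 pX3 pY2.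
apply: (eq_by_combination
  (- 3%:R * x 1 2 * x 1 2 * x 2 0 * y 1 0 * y 2 1
   - 3%:R * x 1 2 * x 1 2 * x 2 0 * y 0 0 * y 2 0
   - 6%:R * x 1 1 * x 1 2 * x 2 0 * y 1 0 * y 1 1
   - 6%:R * x 1 1 * x 1 2 * x 2 0 * y 0 0 * y 1 0
   + 3%:R * x 1 1 * x 1 1 * x 2 0 * y 1 0 * y 1 2
   + 3%:R * x 1 0 * x 1 2 * x 2 1 * y 1 0 * y 1 1
   + 3%:R * x 1 0 * x 1 2 * x 2 1 * y 0 0 * y 1 0
   + 3%:R * x 1 0 * x 1 2 * x 2 0 * y 1 2 * y 2 1
   + 3%:R * x 1 0 * x 1 2 * x 2 0 * y 1 1 * y 1 1
   + 3%:R * x 1 0 * x 1 2 * x 2 0 * y 0 2 * y 2 0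
   + 3%:R * x 1 0 * x 1 2 * x 2 0 * y 0 0 * y 1 1
   - 3%:R * x 1 0 * x 1 1 * x 2 1 * y 1 0 * y 1 2
   + 3%:R * x 1 0 * x 1 1 * x 2 0 * y 0 2 * y 1 0
   - 3%:R * x 1 0 * x 1 1 * x 1 2 * y 1 0 * y 2 1
   - 3%:R * x 1 0 * x 1 1 * x 1 2 * y 0 0 * y 2 0
   - 3%:R * x 1 0 * x 1 1 * x 1 1 * y 1 0 * y 1 1
   - 3%:R * x 1 0 * x 1 1 * x 1 1 * y 0 0 * y 1 0
   - 3%:R * x 1 0 * x 1 0 * x 2 1 * y 0 2 * y 1 0
   + 3%:R * x 1 0 * x 1 0 * x 1 1 * y 1 2 * y 2 1
   + 3%:R * x 1 0 * x 1 0 * x 1 1 * y 1 1 * y 1 1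
   + 3%:R * x 1 0 * x 1 0 * x 1 1 * y 0 2 * y 2 0
   + 3%:R * x 1 0 * x 1 0 * x 1 1 * y 0 0 * y 1 1
   - 3%:R * x 0 2 * x 1 0 * x 1 2 * y 2 0 * y 2 0
   - 3%:R * x 0 2 * x 1 0 * x 1 1 * y 1 0 * y 2 0
   - 3%:R * x 0 2 * x 1 0 * x 1 0 * y 0 0 * y 2 0
   - 3%:R * x 0 1 * x 1 0 * x 1 2 * y 1 0 * y 2 0
   - 3%:R * x 0 1 * x 1 0 * x 1 1 * y 1 0 * y 1 0
   - 3%:R * x 0 1 * x 1 0 * x 1 0 * y 0 0 * y 1 0
   + 3%:R * x 0 0 * x 1 2 * x 1 2 * y 2 0 * y 2 0
   + 6%:R * x 0 0 * x 1 1 * x 1 2 * y 1 0 * y 2 0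
   + 3%:R * x 0 0 * x 1 1 * x 1 1 * y 1 0 * y 1 0
   - 3%:R * x 0 0 * x 1 0 * x 1 2 * y 1 0 * y 2 1
   - 3%:R * x 0 0 * x 1 0 * x 1 1 * y 1 0 * y 1 1
   + 3%:R * x 0 0 * x 1 0 * x 1 0 * y 1 2 * y 2 1
   + 3%:R * x 0 0 * x 1 0 * x 1 0 * y 1 1 * y 1 1
   + 3%:R * x 0 0 * x 1 0 * x 1 0 * y 0 2 * y 2 0
   + 3%:R * x 0 0 * x 1 0 * x 1 0 * y 0 0 * y 1 1)
  (- 2%:R * x 1 2 * x 2 0 * y 1 0 * y 1 1 - 2%:R * x 1 2 * x 2 0 * y 0 0 * y 1 0
   + 2%:R * x 1 2 * x 1 2 * y 2 0 * y 2 0 + 2%:R * x 1 1 * x 2 0 * y 1 0 * y 1 2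
   + 4%:R * x 1 1 * x 1 2 * y 1 0 * y 2 0 + 2%:R * x 1 1 * x 1 1 * y 1 0 * y 1 0
   + 2%:R * x 1 0 * x 2 0 * y 0 2 * y 1 0 + 2%:R * x 1 0 * x 1 2 * y 1 1 * y 2 0
   + 4%:R * x 1 0 * x 1 2 * y 0 0 * y 2 0 - 2%:R * x 1 0 * x 1 1 * y 1 2 * y 2 0
   + 2%:R * x 1 0 * x 1 1 * y 0 0 * y 1 0 - 2%:R * x 1 0 * x 1 0 * y 0 2 * y 2 0
   + 2%:R * x 0 0 * x 1 2 * y 1 0 * y 2 0 + 2%:R * x 0 0 * x 1 1 * y 1 0 * y 1 0
   + 2%:R * x 0 0 * x 1 0 * y 0 0 * y 1 0)
  0
  (mulfI six_neq0) pX2 pX3 pY2).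
by ring.
Qed.

Lemma trX2Y2J_trX2Y2XJ_eq0 :
  t [:: 1; 2] = 0 -> t [:: 1; 2; 2] = 0 ->
  t [:: 2; 2; 3; 3; 1] = 0 /\ t [:: 2; 2; 3; 3; 2; 1] = 0.
Proof.
have two_neq0 : 2%:R != 0 :> F.
  by apply: contraNneq six_neq0; rewrite (natrM F 2 3) => ->; rewrite mul0r.
move: (trX 1) (trX 2); expand_in_coordinates => pX2 pX3 tJX tJX2.
have x10 : x 1 0 = 0 by rewrite -tJX; ring.
rewrite x10 in pX2 pX3 tJX2 *.
have /eqP : x 1 2 * x 2 0 = 0 by rewrite -tJX2; ring.
rewrite mulf_eq0 => /orP [] /eqP x_eq0; rewrite x_eq0 in pX2 pX3 *.
- have /eqP : x 1 1 ^+ 3 = 0.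
    apply: (eq_by_combination (3%:R * x 1 1) 2%:R 0 (mulfI six_neq0) pX2 pX3 pX3).
    by ring.
  rewrite expf_eq0 /= => /eqP ->.
  by split; ring.
- have /eqP : x 0 0 ^+ 3 = 0.
    apply: (eq_by_combination (3%:R * x 0 0) 2%:R 0 (mulfI six_neq0) pX2 pX3 pX3).
    by ring.
  rewrite expf_eq0 /= => /eqP x00; rewrite x00 in pX2 *.
  have x11_x21 : x 1 1 * x 1 1 + x 1 2 * x 2 1 = 0.
    by apply: (mulfI two_neq0); rewrite mulr0 -pX2; ring.
  split; last by ring.
  transitivity ((x 1 1 * x 1 1 + x 1 2 * x 2 1)
                * (y 1 0 * y 0 0 + y 1 1 * y 1 0 + y 1 2 * y 2 0)); first by ring.
  by rewrite x11_x21 mul0r.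
Qed.

End NilpotentPair.

Definition known_words : seq (seq nat) :=
  [:: [:: 1; 2]; [:: 1; 2; 2]; [:: 1; 3]; [:: 1; 2; 3]; [:: 1; 3; 2];
      [:: 2; 2; 3; 1]; [:: 2; 2; 1; 3]; [:: 3; 3; 2; 1]; [:: 2; 2; 1; 2; 3];
      [:: 2; 3]; [:: 2; 2; 3]; [:: 2; 3; 3]; [:: 2; 2; 3; 3]]%N.

Lemma known_words_sub_S33 : {subset known_words <= S33}.
Proof. by apply/allP. Qed.

Lemma known_words_swap23_rot :
  all (fun w => has (fun n => rot n (map swap23 w) \in S33) (iota 0 (size w)))
      known_words.
Proof. by []. Qed.

Section TwoPairs.
Variables (F : fieldType) (X Y X' Y' : 'M[F]_3).
Hypotheses (six_neq0 : 6%:R != 0 :> F)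
  (trX : forall k, \tr (X ^+ k.+1) = 0) (trY : forall k, \tr (Y ^+ k.+1) = 0)
  (trX' : forall k, \tr (X' ^+ k.+1) = 0) (trY' : forall k, \tr (Y' ^+ k.+1) = 0).
Hypothesis known : {in known_words, trw (E12 F) X Y =1 trw (E12 F) X' Y'}.

Local Notation t w := (trw (E12 F) X Y w%N).
Local Notation t' w := (trw (E12 F) X' Y' w%N).

Lemma trX2Y2J_determined : t [:: 2; 2; 3; 3; 1] = t' [:: 2; 2; 3; 3; 1].
Proof.
have [tJX0 | tJX_neq0] := eqVneq (t [:: 1; 2]) 0; last first.
  apply: (mulfI tJX_neq0).
  rewrite (trJX_mul_trX2Y2J six_neq0 trX trY) (@known [:: 1; 2]%N) //.
  by rewrite (trJX_mul_trX2Y2J six_neq0 trX' trY') !known.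
have tJX0' : t' [:: 1; 2] = 0 by rewrite -known.
have [tJX20 | tJX2_neq0] := eqVneq (t [:: 1; 2; 2]) 0.
  have tJX20' : t' [:: 1; 2; 2] = 0 by rewrite -known.
  rewrite (trX2Y2J_trX2Y2XJ_eq0 six_neq0 trX trY tJX0 tJX20).1.
  by rewrite (trX2Y2J_trX2Y2XJ_eq0 six_neq0 trX' trY' tJX0' tJX20').1.
have := trJX_mul_trX2Y2XJ six_neq0 trX trY.
have := trJX_mul_trX2Y2XJ six_neq0 trX' trY'.
rewrite tJX0 tJX0' !mul0r => /esym/eqP; rewrite addr_eq0 => /eqP uX'.
move=> /esym/eqP; rewrite addr_eq0 => /eqP uX.
apply: (mulfI tJX2_neq0).
by rewrite uX (@known [:: 1; 2; 2]%N) // uX' !known.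
Qed.

Lemma trX2Y2XJ_determined : t [:: 2; 2; 3; 3; 2; 1] = t' [:: 2; 2; 3; 3; 2; 1].
Proof.
have [tJX0 | tJX_neq0] := eqVneq (t [:: 1; 2]) 0; last first.
  apply: (mulfI tJX_neq0).
  rewrite (trJX_mul_trX2Y2XJ six_neq0 trX trY) (@known [:: 1; 2]%N) //.
  by rewrite (trJX_mul_trX2Y2XJ six_neq0 trX' trY') trX2Y2J_determined !known.
have tJX0' : t' [:: 1; 2] = 0 by rewrite -known.
have [tJX20 | tJX2_neq0] := eqVneq (t [:: 1; 2; 2]) 0.
  have tJX20' : t' [:: 1; 2; 2] = 0 by rewrite -known.
  rewrite (trX2Y2J_trX2Y2XJ_eq0 six_neq0 trX trY tJX0 tJX20).2.
  by rewrite (trX2Y2J_trX2Y2XJ_eq0 six_neq0 trX' trY' tJX0' tJX20').2.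
apply: (mulfI tJX2_neq0).
rewrite (trJX2_mul_trX2Y2XJ six_neq0 trX trY) (@known [:: 1; 2; 2]%N) //.
by rewrite (trJX2_mul_trX2Y2XJ six_neq0 trX' trY') !known.
Qed.

End TwoPairs.

Theorem lemma7p1 (F : closedFieldType) (hchar : [pchar F] =i pred0)
    (A2 A3 B2 B3 : 'M[F]_3) :
  nilpotent_mx (E12 F) -> nilpotent_mx A2 -> nilpotent_mx A3 ->
  nilpotent_mx B2 -> nilpotent_mx B3 ->
  (forall w, w \in S33 -> trw (E12 F) A2 A3 w = trw (E12 F) B2 B3 w) ->
  forall w, w \in P33 -> trw (E12 F) A2 A3 w = trw (E12 F) B2 B3 w.
Proof.
move=> _ nA2 nA3 nB2 nB3 eqS w.
have six_neq0 : 6%:R != 0 :> F by move/pcharf0P: hchar => ->.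
have [trA2 trA3] := (nilpotent_mx_trX nA2, nilpotent_mx_trX nA3).
have [trB2 trB3] := (nilpotent_mx_trX nB2, nilpotent_mx_trX nB3).
have known : {in known_words, trw (E12 F) A2 A3 =1 trw (E12 F) B2 B3}.
  by move=> v /known_words_sub_S33; apply: eqS.
have known_swap : {in known_words, trw (E12 F) A3 A2 =1 trw (E12 F) B3 B2}.
  move=> v /(allP known_words_swap23_rot) /hasP [n _ /eqS].
  by rewrite !trw_rot -!trw_swap23.
have [u1 v1] := (trX2Y2J_determined six_neq0 trA2 trA3 trB2 trB3 known,
                 trX2Y2XJ_determined six_neq0 trA2 trA3 trB2 trB3 known).
have := (trX2Y2J_determined six_neq0 trA3 trA2 trB3 trB2 known_swap,
         trX2Y2XJ_determined six_neq0 trA3 trA2 trB3 trB2 known_swap).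
rewrite !(trw_swap23 _ A2 A3) !(trw_swap23 _ B2 B3) /= => -[u2 v2].
rewrite mem_cat => /orP [/eqS // | wP'].
have [J11 | noJ11] := boolP (infix [:: 1; 1]%N w).
  by rewrite !trw_infix11 // E12_sq.
have : w \in [seq v <- P'33 | ~~ infix [:: 1; 1]%N v] by rewrite mem_filter noJ11.
by rewrite /= !inE => /or4P [] /eqP ->.
Qed.
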